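(* Let $k:\mathbb{R}^d\to[0,\infty)$ be radial with $\int_{\mathbb{R}^d}k=1$, $|x|^2k\in L^1(\mathbb{R}^d)$ and $\nabla k\in L^1(\mathbb{R}^d)$, and let $\hat k(\xi)=\int_{\mathbb{R}^d}k(x)e^{-2\pi i x\cdot\xi}\mathrm{d} x$. Define $h:\mathbb{R}^d\to\mathbb{R}^d$ by $h(\xi)=\xi\sqrt{\frac{\hat k(0)-\hat k(\xi)}{|\xi|^2}}$ for $\xi\ne0$ and $h(0)=0$. Then $h$ is globally Lipschitz on $\mathbb{R}^d$.
   Context: Under these assumptions $\hat k$ is real and $\hat k(0)-\hat k(\xi)\ge0$ for all $\xi$, so $h$ is well defined. *)

From HB Require Import structures.
From mathcomp Require Import all_boot all_order all_algebra.
From mathcomp Require Import all_classical all_reals all_analysis.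
From mathcomp Require Import complex.

Set Implicit Arguments.
Unset Strict Implicit.
Unset Printing Implicit Defensive.

Import Order.TTheory GRing.Theory Num.Theory.
Import numFieldNormedType.Exports.

Local Open Scope classical_set_scope.
Local Open Scope ring_scope.

(* R^d is represented by row vectors 'rV[R]_d; coordinates x 0 i. *)
Section Defs.
Variable R : realType.

(* Euclidean inner product and Euclidean norm on R^d
   (the library norm on 'rV is the max-norm, so we define these explicitly). *)
Definition dotR (d : nat) (x y : 'rV[R]_d) : R := \sum_(i < d) x 0 i * y 0 i.
Definition enorm (d : nat) (x : 'rV[R]_d) : R := Num.sqrt (dotR x x).

(* Borel sigma-algebra on R^d : generated by the open sets of the
   (product = Euclidean) topology of 'rV[R]_d. *)
Definition borel_rV (d : nat) : set (set 'rV[R]_d) := <<s open >>.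

Definition borel_fun (d : nat) (f : 'rV[R]_d -> R) : Prop :=
  forall B : set R, measurable B -> borel_rV (f @^-1` B).

(* Lebesgue integral over R^d of a nonnegative (extended-real) function,
   as the iterated integral dx_1 dx_2 ... dx_d of one-dimensional Lebesgue
   integrals (equal to the d-dimensional Lebesgue integral for Borel
   measurable nonnegative functions, by Tonelli). *)
Fixpoint iint_nn (n : nat) : ('rV[R]_n -> \bar R) -> \bar R :=
  match n return ('rV[R]_n -> \bar R) -> \bar R with
  | 0 => fun f => f 0
  | n'.+1 => fun f =>
      (\int[@lebesgue_measure R]_(t in [set: R])
         iint_nn (fun y : 'rV[R]_n' => f (row_mx (const_mx t : 'rV[R]_1) y)))%E
  end.

Definition iint (d : nat) (f : 'rV[R]_d -> R) : \bar R :=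
  (iint_nn (fun x => (Num.max (f x) 0)%:E) - iint_nn (fun x => (Num.max (- f x) 0)%:E))%E.

Definition L1 (d : nat) (f : 'rV[R]_d -> R) : Prop :=
  borel_fun f /\ (iint_nn (fun x => `|f x|%:E) < +oo)%E.

Definition radial (d : nat) (k : 'rV[R]_d -> R) : Prop :=
  forall x y, enorm x = enorm y -> k x = k y.

Definition ebasis (d : nat) (j : 'I_d) : 'rV[R]_d := delta_mx 0 j.

Fixpoint iter_partial (d : nat) (s : seq 'I_d) (phi : 'rV[R]_d -> R)
  : 'rV[R]_d -> R :=
  match s with
  | [::] => phi
  | j :: s' => fun x => derive (iter_partial s' phi) x (ebasis j)
  end.

Definition test_fun (d : nat) (phi : 'rV[R]_d -> R) : Prop :=
  (forall s : seq 'I_d, continuous (iter_partial s phi) /\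
     forall (j : 'I_d) x, derivable (iter_partial s phi) x (ebasis j)) /\
  compact (closure [set x | phi x != 0]).

Definition weak_grad_L1 (d : nat) (k : 'rV[R]_d -> R) : Prop :=
  exists g : 'I_d -> 'rV[R]_d -> R,
    forall j : 'I_d, L1 (g j) /\
      forall phi, test_fun phi ->
        iint (fun x => k x * derive phi x (ebasis j))
        = (- iint (fun x => (g j x * phi x)%R))%E.

Definition fourier (d : nat) (k : 'rV[R]_d -> R) (xi : 'rV[R]_d) : R[i] :=
  (fine (iint (fun x => k x * cos (2 * pi * dotR x xi))) +i*
   fine (iint (fun x => - (k x * sin (2 * pi * dotR x xi)))))%C.

(* h(xi) = xi sqrt((khat 0 - khat xi)/|xi|^2), h(0) = 0;
   khat is real under the hypotheses, we take the real part. *)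
Definition hmap (d : nat) (k : 'rV[R]_d -> R) (xi : 'rV[R]_d) : 'rV[R]_d :=
  if xi == 0 then 0
  else Num.sqrt (complex.Re (fourier k 0 - fourier k xi) / enorm xi ^+ 2) *: xi.

End Defs.

From HB Require Import structures.
From mathcomp Require Import all_boot all_order all_algebra.
From mathcomp Require Import all_classical all_reals all_analysis.
From mathcomp Require Import complex.
From mathcomp Require Import lra ring.
From mathcomp Require Import measurable_realfun.
Import Order.TTheory GRing.Theory Num.Theory.
Import numFieldNormedType.Exports.

(** Write F(xi) = Re (khat 0 - khat xi) = int k(x) (1 - cos (2 pi x.xi)) dx
   = 2 int k(x) sin^2 (pi x.xi) dx, so that h(xi) = (sqrt F(xi) / |xi|) xi.
   Since sin is 1-Lipschitz, |sin (pi x.xi) - sin (pi x.eta)| <= pi |x| |xi - eta|;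
   combining this pointwise with a^2 <= (1 + l) b^2 + (1 + 1/l) (a - b)^2,
   integrating against k and optimising over l > 0 yields the triangle
   inequality sqrt F(xi) <= sqrt F(eta) + K |xi - eta| in L^2(k), with
   K = pi sqrt (2 int |x|^2 k).  Thus sqrt F is K-Lipschitz and vanishes at 0,
   and rescaling each xi to length g(xi) is 3K-Lipschitz for any such g. *)

Set Implicit Arguments.
Unset Strict Implicit.
Unset Printing Implicit Defensive.

Local Open Scope classical_set_scope.
Local Open Scope ring_scope.

Local Notation rowBorel R n := (g_sigma_algebraType (@open 'rV[R]_n)).

Section euclidean.
Variables (R : realType) (d : nat).
Implicit Types (a : R) (x y z : 'rV[R]_d).

Lemma dotRC x y : dotR x y = dotR y x.
Proof. by apply: eq_bigr => i _; rewrite mulrC. Qed.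

Lemma dotRDl x y z : dotR (x + y) z = dotR x z + dotR y z.
Proof. by rewrite /dotR -big_split; apply: eq_bigr => i _; rewrite mxE mulrDl. Qed.

Lemma dotRBl x y z : dotR (x - y) z = dotR x z - dotR y z.
Proof. by rewrite /dotR -sumrB; apply: eq_bigr => i _; rewrite !mxE mulrBl. Qed.

Lemma dotRBr x y z : dotR z (x - y) = dotR z x - dotR z y.
Proof. by rewrite dotRC dotRBl !(dotRC z). Qed.

Lemma dotRZl a x y : dotR (a *: x) y = a * dotR x y.
Proof. by rewrite /dotR mulr_sumr; apply: eq_bigr => i _; rewrite mxE mulrA. Qed.

Lemma dotRZr a x y : dotR x (a *: y) = a * dotR x y.
Proof. by rewrite dotRC dotRZl dotRC. Qed.

Lemma dotR0r x : dotR x 0 = 0.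
Proof. by rewrite /dotR big1 // => i _; rewrite mxE mulr0. Qed.

Lemma dotR_ge0 x : 0 <= dotR x x.
Proof. by apply: sumr_ge0 => i _; rewrite -expr2 sqr_ge0. Qed.

Lemma dotR_eq0 x : (dotR x x == 0) = (x == 0).
Proof.
apply/eqP/eqP => [x0|->]; last exact: dotR0r.
apply/rowP => i; rewrite mxE; apply/eqP; rewrite -[_ == 0]orbb -mulf_eq0; apply/eqP.
by move: x0 => /psumr_eq0P-> // j _; rewrite -expr2 sqr_ge0.
Qed.

Lemma dotR_CauchySchwarz x y : dotR x y ^+ 2 <= dotR x x * dotR y y.
Proof.
have [/eqP|y0] := eqVneq (dotR y y) 0.
  by rewrite dotR_eq0 => /eqP->; rewrite !dotR0r mulr0 expr0n.
have ypos : 0 < dotR y y by rewrite lt_def y0 dotR_ge0.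
have := dotR_ge0 (dotR y y *: x - dotR x y *: y).
rewrite !dotRBl !dotRBr !dotRZl !dotRZr (dotRC y x) => H.
have : 0 <= dotR y y * (dotR x x * dotR y y - dotR x y ^+ 2) by nra.
by rewrite pmulr_rge0 // subr_ge0.
Qed.

Lemma enorm_ge0 x : 0 <= enorm x.
Proof. exact: sqrtr_ge0. Qed.

Lemma enorm_sqr x : enorm x ^+ 2 = dotR x x.
Proof. by rewrite sqr_sqrtr // dotR_ge0. Qed.

Lemma enorm0 : enorm (0 : 'rV[R]_d) = 0.
Proof. by rewrite /enorm dotR0r sqrtr0. Qed.

Lemma enorm_gt0 x : (0 < enorm x) = (x != 0).
Proof. by rewrite sqrtr_gt0 lt_def dotR_ge0 dotR_eq0 andbT. Qed.

Lemma enormZ a x : enorm (a *: x) = `|a| * enorm x.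
Proof.
by rewrite /enorm dotRZl dotRZr mulrA -expr2 sqrtrM ?sqr_ge0 // sqrtr_sqr.
Qed.

Lemma enormN x : enorm (- x) = enorm x.
Proof. by rewrite -scaleN1r enormZ normrN1 mul1r. Qed.

Lemma enorm_distC x y : enorm (x - y) = enorm (y - x).
Proof. by rewrite -enormN opprB. Qed.

Lemma ler_dotR_enorm x y : `|dotR x y| <= enorm x * enorm y.
Proof.
rewrite -sqrtr_sqr /enorm -sqrtrM ?dotR_ge0 //.
exact/ler_wsqrtr/dotR_CauchySchwarz.
Qed.

Lemma enormD x y : enorm (x + y) <= enorm x + enorm y.
Proof.
rewrite -(@ler_pXn2r _ 2) ?nnegrE ?addr_ge0 ?enorm_ge0 //.
rewrite enorm_sqr dotRDl !(dotRC _ (x + y)) !dotRDl -!enorm_sqr (dotRC x y).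
have := ler_dotR_enorm y x; have := ler_norm (dotR y x); nra.
Qed.

Lemma lerB_enorm x y : enorm x - enorm y <= enorm (x - y).
Proof. by rewrite lerBlDr (le_trans _ (enormD _ _)) // subrK. Qed.

End euclidean.

Section borel_rows.
Variable R : realType.

Lemma ball_row_mx m n1 n2 (a c : 'M[R]_(m, n1)) (b e : 'M[R]_(m, n2)) r :
  ball (row_mx a b) r (row_mx c e) <-> ball a r c /\ ball b r e.
Proof.
split=> [[r0 H]|[[r0 H1] [_ H2]]].
- split; split=> // i j.
  + by have := H i (lshift n2 j); rewrite !row_mxEl.
  + by have := H i (rshift n1 j); rewrite !row_mxEr.
- split=> // i j.
  by case: (split_ordP j) => l ->; rewrite ?row_mxEl ?row_mxEr.
Qed.

Lemma ball_const_mx (s t r : R) :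
  ball (const_mx s : 'rV[R]_1) r (const_mx t) <-> ball s r t.
Proof.
split=> [[_ H]|H]; first by have := H 0 0; rewrite !mxE.
split=> [|i j]; first exact: le_lt_trans H.
by rewrite !mxE.
Qed.

Definition rat_ball n (qr : 'rV[rat]_n * rat) : set 'rV[R]_n :=
  ball (map_mx (@ratr R) qr.1) (ratr qr.2).

Lemma open_bigcup_rat_ball n (U : set 'rV[R]_n) : open U ->
  U = \bigcup_qr (if `[< rat_ball qr `<=` U >] then rat_ball qr else set0).
Proof.
move=> oU; apply/seteqP; split=> [x Ux|x [qr _]]; last first.
  by case: asboolP => // sU /sU.
have /nbhs_ballP[e /= e0 sU] := oU x Ux.
have [r] : exists r : rat, ratr r \in `](e / 4), (e / 2)[.
  by apply: rat_in_itvoo; lra.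
rewrite in_itv /= => /andP[r1 r2].
have /choice[q qx] : forall j,
    exists q : rat, ratr q \in `](x 0 j - e / 4), (x 0 j + e / 4)[.
  by move=> j; apply: rat_in_itvoo; lra.
have {}qx j : `|ratr (q j) - x 0 j| < e / 4.
  by move: (qx j); rewrite in_itv /= ltr_norml => /andP[? ?]; apply/andP; split; lra.
pose qr := (\row_j q j, r).
have ball_sub : rat_ball qr `<=` U.
  move=> y [_ qy]; apply: sU; split=> // i j; rewrite !ord1.
  move: (qy 0 j) (qx j); rewrite /ball /= !mxE => qyj qxj.
  rewrite -(subrKA (ratr (q j))) addrC (le_lt_trans (ler_normD _ _)) //.
  by rewrite !(distrC _ (ratr (q j))); lra.
exists qr => //; rewrite asboolT //.
by split=> [|i j] /=; [lra|rewrite !ord1 /ball /= !mxE; have := qx j; lra].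
Qed.

Definition rowcons n (p : R * 'rV[R]_n) : 'rV[R]_n.+1 :=
  row_mx (const_mx p.1 : 'rV[R]_1) p.2.

Lemma rowcons_submx n (c : 'rV[R]_n.+1) :
  rowcons (lsubmx (c : 'rV_(1 + n)) 0 0, rsubmx (c : 'rV_(1 + n))) = c.
Proof.
apply/rowP => j; rewrite /rowcons /=.
case: (@split_ordP 1 n j) => l ->.
  by rewrite (@row_mxEl _ 1 1 n) !mxE ord1.
by rewrite (@row_mxEr _ 1 1 n) !mxE.
Qed.

Lemma preimage_rowcons_ball n s (c : 'rV[R]_n) r :
  @rowcons n @^-1` ball (rowcons (s, c)) r = ball s r `*` ball c r.
Proof.
apply/seteqP; split=> [[t y]|[t y]] /=.
  by move=> /(@ball_row_mx 1 1 n)[/ball_const_mx].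
by move=> [? ?]; apply/(@ball_row_mx 1 1 n); split=> //; apply/ball_const_mx.
Qed.

(* Balls of the max-norm on rows are boxes, and open sets are countable unions
   of rational balls. *)
Lemma measurable_rowcons n :
  measurable_fun [set: (R * rowBorel R n)%type] (@rowcons n : _ -> rowBorel R n.+1).
Proof.
apply: (@measurability _ _ _ (rowBorel R n.+1) _ _ (@open 'rV[R]_n.+1)) => //.
move=> _ [U oU <-]; rewrite setTI (open_bigcup_rat_ball oU) preimage_bigcup.
apply: countable_bigcupT_measurable => [|qr]; first exact: countableP.
case: asboolP => _; last by rewrite preimage_set0.
rewrite /rat_ball -[map_mx _ qr.1]rowcons_submx preimage_rowcons_ball.
apply: measurableX.
  by apply: measurable_realfun.open_measurable; exact: ball_open.
by apply: sub_sigma_algebra; exact: ball_open.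
Qed.

End borel_rows.

Section measurable_rows.
Variables (R : realType) (d : nat).

Lemma borel_fun_measurable (f : 'rV[R]_d -> R) :
  borel_fun f -> measurable_fun [set: rowBorel R d] f.
Proof. by move=> bf _ B mB; rewrite setTI; exact: bf. Qed.

Lemma continuous_measurable_rowBorel (f : 'rV[R]_d -> R) :
  continuous f -> measurable_fun [set: rowBorel R d] f.
Proof.
move=> cf; apply: (measurability _ (RGenOpens.measurableE R)) => //.
move=> _ [_ [a [b ->]] <-]; apply: sub_sigma_algebra; rewrite setTI.
exact: (proj1 (continuousP _) cf) (interval_open _ _).
Qed.

Lemma measurable_coord (i : 'I_d) :
  measurable_fun [set: rowBorel R d] (fun x => x 0 i).
Proof. exact: continuous_measurable_rowBorel (@coord_continuous R 1 d 0 i). Qed.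

Lemma measurable_dotR (y : 'rV[R]_d) :
  measurable_fun [set: rowBorel R d] (fun x => dotR x y).
Proof.
apply: measurable_sum => i; apply: measurable_funM; first exact: measurable_coord.
exact: measurable_cst.
Qed.

Lemma measurable_enorm : measurable_fun [set: rowBorel R d] (@enorm R d).
Proof.
apply: (measurableT_comp (continuous_measurable_fun (@sqrt_continuous R))).
by apply: measurable_sum => i; apply: measurable_funM; exact: measurable_coord.
Qed.

End measurable_rows.

Section iterated_integral.
Variable R : realType.
Local Open Scope ereal_scope.

Lemma iint_nn_ge0 n (f : 'rV[R]_n -> \bar R) :
  (forall x, 0 <= f x) -> 0 <= iint_nn f.
Proof.
elim: n f => [|n IH] f f0 /=; first exact: f0.
by apply: integral_ge0 => t _; apply: IH.
Qed.

Lemma iint_nn0 n : iint_nn (fun _ : 'rV[R]_n => 0) = 0.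
Proof.
elim: n => [|n IH] //=.
by rewrite (eq_integral (fun _ => 0)) ?integral0 // => t _; rewrite IH.
Qed.

Lemma measurable_fun_iint_nn n d (T : measurableType d)
    (f : (T * rowBorel R n)%type -> \bar R) :
  measurable_fun [set: (T * rowBorel R n)%type] f -> (forall p, 0 <= f p) ->
  measurable_fun [set: T] (fun x => iint_nn (fun y : 'rV[R]_n => f (x, y))).
Proof.
elim: n d T f => [|n IH] d T f mf f0.
  apply: (measurableT_comp mf); exact: measurable_fun_pair.
pose g (p : (T * R * rowBorel R n)%type) := f (p.1.1, rowcons (p.1.2, p.2)).
have mg : measurable_fun [set: (T * R * rowBorel R n)%type] g.
  apply: (measurableT_comp mf); apply: measurable_fun_pair.
    exact: measurableT_comp measurable_fst measurable_fst.
  apply: (measurableT_comp (@measurable_rowcons R n)).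
  apply: measurable_fun_pair => //.
  exact: measurableT_comp measurable_snd measurable_fst.
have := IH _ _ g mg (fun p => f0 _).
move=> /(@measurable_fun_fubini_tonelli_F _ _ _ _ _ (@lebesgue_measure R)).
by apply => p; apply: iint_nn_ge0 => y; apply: f0.
Qed.

Lemma measurable_fun_rowcons_section n (f : rowBorel R n.+1 -> \bar R) t :
  measurable_fun [set: rowBorel R n.+1] f ->
  measurable_fun [set: rowBorel R n] (fun y => f (rowcons (t, y))).
Proof.
move=> mf; apply: (measurableT_comp mf).
apply: (measurableT_comp (@measurable_rowcons R n)).
exact: measurable_fun_pair.
Qed.

Lemma measurable_fun_iint_nn_rowcons n (f : rowBorel R n.+1 -> \bar R) :
  measurable_fun [set: rowBorel R n.+1] f -> (forall x, 0 <= f x) ->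
  measurable_fun [set: R] (fun t => iint_nn (fun y : 'rV[R]_n => f (rowcons (t, y)))).
Proof.
move=> mf f0; apply: (measurable_fun_iint_nn (f := f \o @rowcons R n)) => [|p].
  exact: measurableT_comp mf (@measurable_rowcons R n).
exact: f0.
Qed.

Lemma ge0_iint_nnD n (f g : rowBorel R n -> \bar R) :
  measurable_fun [set: rowBorel R n] f -> measurable_fun [set: rowBorel R n] g ->
  (forall x, 0 <= f x) -> (forall x, 0 <= g x) ->
  iint_nn (fun x => f x + g x) = iint_nn f + iint_nn g.
Proof.
elim: n f g => [|n IH] f g mf mg f0 g0 //=.
under eq_integral => t _.
  rewrite (IH (fun y => f (rowcons (t, y))) (fun y => g (rowcons (t, y)))) //;
    try exact: measurable_fun_rowcons_section.
  over.
apply: ge0_integralD => // [t _||t _|].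
- exact: iint_nn_ge0.
- exact: measurable_fun_iint_nn_rowcons.
- exact: iint_nn_ge0.
- exact: measurable_fun_iint_nn_rowcons.
Qed.

Lemma ge0_iint_nnZl n (f : rowBorel R n -> \bar R) (c : R) :
  measurable_fun [set: rowBorel R n] f -> (forall x, 0 <= f x) -> (0 <= c)%R ->
  iint_nn (fun x => c%:E * f x) = c%:E * iint_nn f.
Proof.
elim: n f => [|n IH] f mf f0 c0 //=.
under eq_integral => t _.
  rewrite (IH (fun y => f (rowcons (t, y)))) //;
    try exact: measurable_fun_rowcons_section.
  over.
apply: ge0_integralZl => // [|t _].
- exact: measurable_fun_iint_nn_rowcons.
- exact: iint_nn_ge0.
Qed.

Lemma ge0_le_iint_nn n (f g : rowBorel R n -> \bar R) :
  measurable_fun [set: rowBorel R n] f -> measurable_fun [set: rowBorel R n] g ->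
  (forall x, 0 <= f x) -> (forall x, f x <= g x) ->
  iint_nn f <= iint_nn g.
Proof.
elim: n f g => [|n IH] f g mf mg f0 fg //=.
have g0 x : 0 <= g x by apply: le_trans (fg x).
apply: ge0_le_integral => //.
- by move=> t _; apply: iint_nn_ge0.
- exact: measurable_fun_iint_nn_rowcons.
- exact: measurable_fun_iint_nn_rowcons.
- by move=> t _; apply: IH => //; apply: measurable_fun_rowcons_section.
Qed.

End iterated_integral.

Section real_iterated_integral.
Variable R : realType.

Lemma iint_ge0 n (f : 'rV[R]_n -> R) : (forall x, 0 <= f x) ->
  iint f = iint_nn (fun x => (f x)%:E).
Proof.
move=> f0; rewrite /iint.
have -> : (fun x => (Num.max (- f x) 0)%:E) = fun=> 0%E.
  by apply/funext => x; rewrite max_r // oppr_le0.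
rewrite iint_nn0 sube0; congr iint_nn; apply/funext => x.
by rewrite max_l.
Qed.

Lemma ge0_iint_nn_fin_num n (f g : rowBorel R n -> R) :
  measurable_fun [set: rowBorel R n] f -> measurable_fun [set: rowBorel R n] g ->
  (forall x, 0 <= f x) -> (forall x, f x <= g x) ->
  iint_nn (fun x => (g x)%:E) \is a fin_num ->
  iint_nn (fun x => (f x)%:E) \is a fin_num.
Proof.
move=> mf mg f0 fg; have g0 x : 0 <= g x := le_trans (f0 x) (fg x).
rewrite !ge0_fin_numE ?iint_nn_ge0 // => gfin.
apply: le_lt_trans gfin; apply: ge0_le_iint_nn => [||x|x]; rewrite ?lee_fin //.
all: exact/measurable_EFinP.
Qed.

Lemma ge0_iint_nnD_EFin n (f g : rowBorel R n -> R) :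
  measurable_fun [set: rowBorel R n] f -> measurable_fun [set: rowBorel R n] g ->
  (forall x, 0 <= f x) -> (forall x, 0 <= g x) ->
  iint_nn (fun x => (f x + g x)%:E) =
  (iint_nn (fun x => (f x)%:E) + iint_nn (fun x => (g x)%:E))%E.
Proof.
move=> mf mg f0 g0.
have -> : (fun x => (f x + g x)%:E) = (fun x => (f x)%:E + (g x)%:E)%E.
  by apply/funext => x; rewrite EFinD.
by apply: ge0_iint_nnD => [||x|x]; rewrite ?lee_fin //; exact/measurable_EFinP.
Qed.

Lemma iint_nnB n (g h : rowBorel R n -> R) :
  measurable_fun [set: rowBorel R n] g -> measurable_fun [set: rowBorel R n] h ->
  (forall x, `|h x| <= g x) -> iint_nn (fun x => (g x)%:E) \is a fin_num ->
  iint_nn (fun x => (g x - h x)%:E) =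
  (fine (iint_nn (fun x => (g x)%:E)) - fine (iint h))%:E.
Proof.
move=> mg mh hg gfin.
pose P x := Num.max (h x) 0; pose N x := Num.max (- h x) 0.
have mP : measurable_fun [set: rowBorel R n] P by apply: measurable_maxr.
have mN : measurable_fun [set: rowBorel R n] N.
  by apply: measurable_maxr => //; exact: measurable_funN.
have mQ : measurable_fun [set: rowBorel R n] (fun x => g x - P x).
  exact: measurable_funB.
have g0 x : 0 <= g x := le_trans (normr_ge0 _) (hg x).
have P0 x : 0 <= P x by rewrite le_max lexx orbT.
have N0 x : 0 <= N x by rewrite le_max lexx orbT.
have Pg x : P x <= g x by rewrite ge_max g0 (ler_normlW (hg x)).
have Ng x : N x <= g x by rewrite ge_max g0 ler_normlW // normrN.
have Q0 x : 0 <= g x - P x by rewrite subr_ge0.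
have Qg x : g x - P x <= g x by rewrite gerBl.
have fineE (f : rowBorel R n -> R) : measurable_fun [set: rowBorel R n] f ->
    (forall x, 0 <= f x) -> (forall x, f x <= g x) ->
    iint_nn (fun x => (f x)%:E) = (fine (iint_nn (fun x => (f x)%:E)))%:E.
  by move=> mf f0 fg; rewrite fineK // (ge0_iint_nn_fin_num mf mg).
have PN x : P x - N x = h x.
  rewrite /P /N; case: (leP 0 (h x)) => hx; first by rewrite max_r ?subr0 // oppr_le0.
  by rewrite max_l ?sub0r ?opprK // oppr_ge0 ltW.
have gE : iint_nn (fun x => (g x)%:E) =
          (iint_nn (fun x => (g x - P x)%:E) + iint_nn (fun x => (P x)%:E))%E.
  by rewrite -ge0_iint_nnD_EFin //; congr iint_nn; apply/funext => x; rewrite subrK.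
have ghE : iint_nn (fun x => (g x - h x)%:E) =
           (iint_nn (fun x => (g x - P x)%:E) + iint_nn (fun x => (N x)%:E))%E.
  rewrite -ge0_iint_nnD_EFin //; congr iint_nn; apply/funext => x.
  by rewrite -(PN x); congr EFin; ring.
rewrite ghE /iint -/P -/N (fineE _ mQ Q0 Qg) (fineE _ mP P0 Pg) (fineE _ mN N0 Ng).
move: gE; rewrite (fineE _ mQ Q0 Qg) (fineE _ mP P0 Pg) -{1}(fineK gfin) -!EFinD.
by move=> /(congr1 fine) /= g_split; congr EFin; lra.
Qed.

End real_iterated_integral.

Lemma ler_dist_sin (R : realType) (u v : R) : `|sin u - sin v| <= `|u - v|.
Proof.
wlog uv : u v / v <= u.
  move=> H; have [/H//|/ltW/H] := leP v u.
  by rewrite distrC [X in _ <= X]distrC.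
have [c _ ->] : exists2 c, c \in `[v, u] & sin u - sin v = cos c * (u - v).
  apply: MVT_segment uv _ _.
  exact: continuous_subspaceT (@continuous_sin R).
by rewrite normrM ler_piMl // cos_max.
Qed.

Lemma sqr_le_weighted (R : realFieldType) (a b l : R) : 0 < l ->
  a ^+ 2 <= (1 + l) * b ^+ 2 + (1 + l^-1) * (a - b) ^+ 2.
Proof.
move=> l0; rewrite -subr_ge0 -(pmulr_rge0 _ l0).
have -> : l * ((1 + l) * b ^+ 2 + (1 + l^-1) * (a - b) ^+ 2 - a ^+ 2) =
          (l * b - (a - b)) ^+ 2 + (a - b) ^+ 2 * (l / l - 1) by ring.
by rewrite divff ?gt_eqF // subrr mulr0 addr0 sqr_ge0.
Qed.

Lemma ler_sqrt_weighted (R : rcfType) (a b c : R) : 0 <= b -> 0 <= c ->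
  (forall l, 0 < l -> a <= (1 + l) * b + (1 + l^-1) * c) ->
  Num.sqrt a <= Num.sqrt b + Num.sqrt c.
Proof.
move=> b0 c0 H.
suff : a <= (Num.sqrt b + Num.sqrt c) ^+ 2.
  by move=> /ler_wsqrtr; rewrite sqrtr_sqr ger0_norm // addr_ge0.
apply/ler_addgt0Pr => e e0.
set sb := Num.sqrt b; set sc := Num.sqrt c.
have sb0 : 0 <= sb := sqrtr_ge0 b.
have sc0 : 0 <= sc := sqrtr_ge0 c.
pose eps := e / (sb + sc + 1).
have eps0 : 0 < eps by rewrite divr_gt0 //; lra.
have epsb : eps * (sb + sc) <= e.
  by rewrite /eps mulrAC ler_pdivrMr; nra.
have p0 : 0 < sc + eps by lra.
have q0 : 0 < sb + eps by lra.
(* The optimal weight [sc / sb], perturbed to stay positive and finite. *)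
have := H _ (divr_gt0 p0 q0); rewrite invf_div.
rewrite -[b](sqr_sqrtr b0) -[c](sqr_sqrtr c0) -/sb -/sc.
have X : (sc + eps) / (sb + eps) * sb ^+ 2 <= (sc + eps) * sb.
  rewrite mulrAC ler_pdivrMr //.
  have := mulr_ge0 (mulr_ge0 (ltW p0) sb0) (ltW eps0); nra.
have Y : (sb + eps) / (sc + eps) * sc ^+ 2 <= (sb + eps) * sc.
  rewrite mulrAC ler_pdivrMr //.
  have := mulr_ge0 (mulr_ge0 (ltW q0) sc0) (ltW eps0); nra.
nra.
Qed.

Section rescale.
Variables (R : realType) (d : nat).

Definition rescale (g : 'rV[R]_d -> R) (x : 'rV[R]_d) : 'rV[R]_d :=
  if x == 0 then 0 else (g x / enorm x) *: x.

Variables (g : 'rV[R]_d -> R) (K : R).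
Hypotheses (K_ge0 : 0 <= K) (g_ge0 : forall x, 0 <= g x)
  (g_lipschitz : forall x y, `|g x - g y| <= K * enorm (x - y))
  (g_le : forall x, g x <= K * enorm x).

Lemma enorm_rescale x : enorm (rescale g x) = g x.
Proof.
rewrite /rescale; case: eqP => [->|/eqP x0].
  have := g_le 0; rewrite !enorm0 mulr0 => g0_le0.
  by apply/eqP; rewrite eq_le g_ge0 g0_le0.
rewrite enormZ ger0_norm ?divr_ge0 ?enorm_ge0 // mulfVK //.
by rewrite gt_eqF // enorm_gt0.
Qed.

(* Split the difference into a change of length along [x] and a change of
   direction at length [g y]. *)
Lemma rescale_lipschitz_le x y : x != 0 -> y != 0 -> enorm y <= enorm x ->
  enorm (rescale g x - rescale g y) <= 3%:R * K * enorm (x - y).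
Proof.
move=> x0 y0 yx; rewrite /rescale (negbTE x0) (negbTE y0).
set a := enorm x; set b := enorm y.
have a0 : 0 < a by rewrite enorm_gt0.
have b0 : 0 < b by rewrite enorm_gt0.
have -> : (g x / a) *: x - (g y / b) *: y =
         ((g x - g y) / a) *: x + (g y / b) *: ((b / a) *: x - y).
  rewrite scalerBr scalerA mulrA mulfVK ?gt_eqF //.
  by rewrite mulrBl scalerBl addrA subrK.
apply: le_trans (enormD _ _) _.
rewrite !enormZ -/a normrM [`|a^-1|]ger0_norm ?invr_ge0 ?(ltW a0) // mulfVK ?gt_eqF //.
rewrite [`|g y / b|]ger0_norm ?divr_ge0 ?g_ge0 ?(ltW b0) //.
have dir_le : enorm ((b / a) *: x - y) <= (a - b) + enorm (x - y).
  rewrite (_ : _ - y = (b / a - 1) *: x + (x - y)); last first.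
    by rewrite scalerBl scale1r addrA subrK.
  apply: le_trans (enormD _ _) _; rewrite enormZ -/a lerD2r.
  rewrite ler0_norm; last by rewrite subr_le0 ler_pdivrMr // mul1r.
  by rewrite opprB mulrBl mul1r mulfVK ?gt_eqF.
have ab : a - b <= enorm (x - y) := lerB_enorm x y.
have gyb : g y / b <= K by rewrite ler_pdivrMr // g_le.
have := g_lipschitz x y; have := enorm_ge0 ((b / a) *: x - y).
have : 0 <= g y / b by rewrite divr_ge0 ?g_ge0 ?ltW.
nra.
Qed.

Lemma rescale_lipschitz x y :
  enorm (rescale g x - rescale g y) <= 3%:R * K * enorm (x - y).
Proof.
have K3 : K <= 3%:R * K by move: K_ge0; lra.
have [->|x0] := eqVneq x 0.
  rewrite {1}/rescale eqxx sub0r enormN enorm_rescale sub0r enormN.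
  by rewrite (le_trans (g_le y)) // ler_wpM2r ?enorm_ge0.
have [->|y0] := eqVneq y 0.
  rewrite [rescale g 0]/rescale eqxx subr0 enorm_rescale subr0.
  by rewrite (le_trans (g_le x)) // ler_wpM2r ?enorm_ge0.
have [/rescale_lipschitz_le->//|/ltW yx] := leP (enorm y) (enorm x).
by rewrite enorm_distC [enorm (x - y)]enorm_distC rescale_lipschitz_le.
Qed.

End rescale.

Lemma one_subcos_le_weighted (R : realType) (d : nat) (x y z : 'rV[R]_d) (l : R) :
  0 < l ->
  1 - cos (2 * pi * dotR x y) <=
  (1 + l) * (1 - cos (2 * pi * dotR x z)) +
  (1 + l^-1) * (2 * pi ^+ 2 * enorm (y - z) ^+ 2) * enorm x ^+ 2.
Proof.
move=> l0.
have one_subcos t : 1 - cos (2 * t) = 2 * sin t ^+ 2.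
  by rewrite [2 * t]mulr_natl cos_mulr2n cos2sin2 mulr2n; lra.
rewrite -!mulrA !one_subcos.
set u := pi * dotR x y; set v := pi * dotR x z.
have uv : (sin u - sin v) ^+ 2 <= pi ^+ 2 * (enorm x ^+ 2 * enorm (y - z) ^+ 2).
  rewrite -real_normK ?num_real // (le_trans (lerXn2r _ _ _ (ler_dist_sin u v))) //.
  rewrite real_normK ?num_real // /u /v -mulrBr -dotRBr exprMn ler_wpM2l ?sqr_ge0 //.
  by rewrite !enorm_sqr dotR_CauchySchwarz.
have := sqr_le_weighted (sin u) (sin v) l0.
have : 0 <= 1 + l^-1 by rewrite addr_ge0 // invr_ge0 ltW.
nra.
Qed.

Section fourier_gap.
Variables (R : realType) (d : nat) (k : 'rV[R]_d -> R).
Hypotheses (k_ge0 : forall x, 0 <= k x) (k_borel : borel_fun k)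
  (k_mass1 : iint_nn (fun x => (k x)%:E) = 1%E)
  (k_moment2 : (iint_nn (fun x => `|enorm x ^+ 2 * k x|%:E) < +oo)%E).

Definition fourier_gap (y : 'rV[R]_d) : R := complex.Re (fourier k 0 - fourier k y).

Let mk : measurable_fun [set: rowBorel R d] k := borel_fun_measurable k_borel.

Let measurable_cos_dotR (y : 'rV[R]_d) :
  measurable_fun [set: rowBorel R d] (fun x => cos (2 * pi * dotR x y)).
Proof.
apply: (measurableT_comp (continuous_measurable_fun (@continuous_cos R))).
by apply: measurable_funM; [exact: measurable_cst|exact: measurable_dotR].
Qed.

Lemma iint_nn_fourier_gap y :
  iint_nn (fun x => (k x * (1 - cos (2 * pi * dotR x y)))%:E) = (fourier_gap y)%:E.
Proof.
have k_cos0 : (fun x => k x * cos (2 * pi * dotR x 0)) = k.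
  by apply/funext => x; rewrite dotR0r mulr0 cos0 mulr1.
rewrite /fourier_gap /fourier /= k_cos0 iint_ge0 // -iint_nnB ?k_mass1 //.
- by congr iint_nn; apply/funext => x; rewrite mulrBr mulr1.
- by apply: measurable_funM => //; exact: measurable_cos_dotR.
- by move=> x; rewrite normrM (ger0_norm (k_ge0 x)) ler_piMr // cos_max.
Qed.

Lemma fourier_gap_ge0 y : 0 <= fourier_gap y.
Proof.
rewrite -lee_fin -iint_nn_fourier_gap; apply: iint_nn_ge0 => x.
by rewrite lee_fin mulr_ge0 // subr_ge0 cos_le1.
Qed.

Lemma fourier_gap0 : fourier_gap 0 = 0.
Proof.
apply: EFin_inj; rewrite -iint_nn_fourier_gap -[RHS](iint_nn0 R d).
by congr iint_nn; apply/funext => x; rewrite dotR0r mulr0 cos0 subrr mulr0.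
Qed.

Definition second_moment : R := fine (iint_nn (fun x => `|enorm x ^+ 2 * k x|%:E)).

Let second_momentE :
  iint_nn (fun x => `|enorm x ^+ 2 * k x|%:E) = second_moment%:E.
Proof.
by rewrite fineK // ge0_fin_numE // iint_nn_ge0 // => x; rewrite lee_fin.
Qed.

Lemma second_moment_ge0 : 0 <= second_moment.
Proof. by rewrite -lee_fin -second_momentE iint_nn_ge0 // => x; rewrite lee_fin. Qed.

Lemma fourier_gap_le_weighted y z l : 0 < l ->
  fourier_gap y <= (1 + l) * fourier_gap z +
                   (1 + l^-1) * (2 * pi ^+ 2 * enorm (y - z) ^+ 2 * second_moment).
Proof.
move=> l0.
set C := (1 + l^-1) * (2 * pi ^+ 2 * enorm (y - z) ^+ 2).
have l1 : 0 <= 1 + l by rewrite addr_ge0 // ltW.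
have C0 : 0 <= C.
  by rewrite /C !mulr_ge0 ?pi_ge0 ?enorm_ge0 // addr_ge0 // invr_ge0 ltW.
pose A w x := k x * (1 - cos (2 * pi * dotR x w)).
pose B x := `|enorm x ^+ 2 * k x|.
have mA w : measurable_fun [set: rowBorel R d] (A w).
  rewrite /A /=; apply: measurable_funM => //; apply: measurable_funB => //.
have mB : measurable_fun [set: rowBorel R d] B.
  rewrite /B /=; apply: (measurableT_comp (@normr_measurable R _)).
  apply: measurable_funM => //.
  by apply: measurable_funX; exact: measurable_enorm.
have A0 w x : (0 <= (A w x)%:E)%E by rewrite lee_fin mulr_ge0 // subr_ge0 cos_le1.
have B0 x : (0 <= (B x)%:E)%E by rewrite lee_fin normr_ge0.
have : (iint_nn (fun x => (A y x)%:E) <=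
        (1 + l)%:E * iint_nn (fun x => (A z x)%:E) +
        C%:E * iint_nn (fun x => (B x)%:E))%E.
  rewrite -!ge0_iint_nnZl //; try exact/measurable_EFinP.
  rewrite -ge0_iint_nnD; try by [move=> x; rewrite mule_ge0 // lee_fin |
    apply: measurable_funeM; exact/measurable_EFinP].
  apply: ge0_le_iint_nn => [||//|x].
  - exact/measurable_EFinP.
  - by apply: emeasurable_funD; apply: measurable_funeM; exact/measurable_EFinP.
  rewrite -!EFinM -EFinD lee_fin /A /B ger0_norm; last by rewrite mulr_ge0 ?sqr_ge0.
  have := ler_wpM2l (k_ge0 x) (one_subcos_le_weighted x y z l0).
  by rewrite /C; nra.
rewrite /A /B !iint_nn_fourier_gap second_momentE -!EFinM -EFinD lee_fin.
by rewrite /C -!mulrA.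
Qed.

Definition sqrt_gap_const : R := Num.sqrt (2 * pi ^+ 2 * second_moment).

Lemma sqrt_fourier_gap_le y z :
  Num.sqrt (fourier_gap y) <=
  Num.sqrt (fourier_gap z) + sqrt_gap_const * enorm (y - z).
Proof.
have c0 : 0 <= 2 * pi ^+ 2 * second_moment.
  by rewrite !mulr_ge0 ?pi_ge0 ?second_moment_ge0.
rewrite -[enorm _]ger0_norm ?enorm_ge0 // -sqrtr_sqr -sqrtrM // mulrAC.
apply: ler_sqrt_weighted => [||l l0]; first exact: fourier_gap_ge0.
- by rewrite mulrAC mulr_ge0 ?sqr_ge0.
- exact: fourier_gap_le_weighted.
Qed.

Lemma sqrt_fourier_gap_lipschitz y z :
  `|Num.sqrt (fourier_gap y) - Num.sqrt (fourier_gap z)| <=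
  sqrt_gap_const * enorm (y - z).
Proof.
rewrite ler_norml lerBlDl lerNl opprB lerBlDl sqrt_fourier_gap_le.
by rewrite enorm_distC sqrt_fourier_gap_le.
Qed.

Lemma sqrt_fourier_gap_le_enorm y :
  Num.sqrt (fourier_gap y) <= sqrt_gap_const * enorm y.
Proof. by have := sqrt_fourier_gap_le y 0; rewrite fourier_gap0 sqrtr0 add0r subr0. Qed.

Lemma hmapE : hmap k = rescale (fun y => Num.sqrt (fourier_gap y)).
Proof.
apply/funext => y; rewrite /hmap /rescale; case: eqP => // _.
rewrite -/(fourier_gap y) sqrtrM ?fourier_gap_ge0 // sqrtrV ?sqr_ge0 //.
by rewrite sqrtr_sqr ger0_norm ?enorm_ge0.
Qed.

End fourier_gap.

Theorem lemma3p1 (R : realType) (d : nat) (k : 'rV[R]_d -> R) :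
  (forall x, 0 <= k x) ->
  radial k ->
  L1 k ->
  iint_nn (fun x => (k x)%:E) = 1%E ->
  L1 (fun x => enorm x ^+ 2 * k x) ->
  weak_grad_L1 k ->
  exists L : R, forall xi eta : 'rV[R]_d,
    enorm (hmap k xi - hmap k eta) <= L * enorm (xi - eta).
Proof.
move=> k_ge0 _ [k_borel _] k_mass1 [_ k_moment2] _.
exists (3%:R * sqrt_gap_const k) => xi eta.
rewrite hmapE //; apply: rescale_lipschitz => [||y z|y].
- exact: sqrtr_ge0.
- by move=> y; exact: sqrtr_ge0.
- exact: sqrt_fourier_gap_lipschitz.
- exact: sqrt_fourier_gap_le_enorm.
Qed.
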